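(* Let $P$ be a map and let $M$ be its phial, and suppose $G_M$ is connected. Then $\chi(P)\le 3-|V(G_M)|+\gamma$, where $\gamma$ is the dimension of the bicycle space of $G_M$. Moreover, equality holds if and only if $P$ is rich.
   Context: A map is a triple $X=(C_X,v_X,f_X)$ where $C_X$ is a finite cubic graph (multiple edges allowed) and $v_X,f_X$ are disjoint perfect matchings whose union is a disjoint union of 4-cycles, the squares of $X$. $a_X=E(C_X)\setminus(v_X\cup f_X)$; $z_X$ is the matching of square diagonals; $Q_X=C_X\cup z_X$. $\chi(X)=\#\{\text{cycles of }v_X\cup a_X\}-\#\text{squares}+\#\{\text{cycles of }f_X\cup a_X\}$. $G_X$ has vertices the cycles of $v_X\cup a_X$ and edges the squares, each joining the cycles containing its two $v_X$-edges. The dual of $X$ is $(C_X,f_X,v_X)$ and the phial is $(Q_X\setminus v_X,z_X,f_X)$ (the phial of the phial is $X$). Edge sets of the graphs of $X$, its dual $D$ and phial are identified with the squares; $V_X,F_X,Z_X$ are their $GF(2)$-coboundary spaces; with $\perp$ w.r.t. $|A\cap B|\bmod 2$, $V_X^\perp$ is the cycle space of $G_X$; one has $F_X+Z_X\subseteq V_X^\perp$, and $X$ is rich if $V_X^\perp=F_X+Z_X$. The bicycle space of a graph is the intersection of its cycle and coboundary spaces. *)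

From mathcomp Require Import all_boot all_order all_algebra.
Set Implicit Arguments.
Unset Strict Implicit.
Unset Printing Implicit Defensive.

(* The vertex set of the cubic graph C_X is a finite type D.  Each of the   *)
(* three perfect matchings v_X, f_X, a_X is encoded by the fixed-point-free *)
(* involution sending a vertex to its partner in that matching (parallel    *)
(* edges between different matchings are allowed, which is how multiple     *)
(* edges of C_X arise).  v_X u f_X is a disjoint union of 4-cycles iff      *)
(* v x <> f x for all x and (v o f)^2 = id.                                 *)

Definition fpf_involution (D : finType) (g : D -> D) : Prop :=
  forall x : D, g (g x) = x /\ g x <> x.

Definition is_map (D : finType) (v f a : D -> D) : Prop :=
  [/\ fpf_involution v, fpf_involution f, fpf_involution a,
      (forall x, v x <> f x) & (forall x, v (f (v (f x))) = x)].

Definition rel2 (D : finType) (g h : D -> D) : rel D :=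
  fun x y => (y == g x) || (y == h x).

Definition comp (D : finType) (g h : D -> D) (x : D) : {set D} :=
  [set y | connect (rel2 g h) x y].

(* the set of cycles of g u h, each given by its vertex set *)
Definition cycles (D : finType) (g h : D -> D) : {set {set D}} :=
  [set comp g h x | x : D].

Definition squares (D : finType) (v f : D -> D) : {set {set D}} := cycles v f.

Definition chi (D : finType) (v f a : D -> D) : int :=
  (#|cycles v a|%:Z - #|squares v f|%:Z + #|cycles f a|%:Z)%R.

(* z_X : x |-> the opposite vertex of its square *)
Definition zmatch (D : finType) (v f : D -> D) : D -> D := fun x => v (f x).

Definition dual_v (D : finType) (v f a : D -> D) := f.
Definition dual_f (D : finType) (v f a : D -> D) := v.
Definition phial_v (D : finType) (v f a : D -> D) := zmatch v f.
Definition phial_f (D : finType) (v f a : D -> D) := f.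
(* (the a-matching is unchanged in both: a_D = a_X and Q_X \ v_X \ (z u f) = a_X) *)

(* Finite multigraphs with vertex set Vt : {set V}, edge set Et : {set E},  *)
(* and an endpoint function (loops allowed).                                 *)

(* G_X: vertices = cycles of v u a; edges = squares; a square s containing x *)
(* joins the cycle containing its v-edge {x, v x} with the cycle containing *)
(* its other v-edge {f x, v (f x)}.  The endpoints are computed from an      *)
(* arbitrary vertex of s; the unordered pair does not depend on the choice. *)
Definition Gends (D : finType) (v f a : D -> D) (s : {set D})
  : {set D} * {set D} :=
  match [pick x in s] with
  | Some x => (comp v a x, comp v a (f x))
  | None => (set0, set0)
  end.

Definition GV (D : finType) (v f a : D -> D) : {set {set D}} := cycles v a.
Definition GE (D : finType) (v f a : D -> D) : {set {set D}} := squares v f.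

Section Graphs.
Variables (V E : finType) (Vt : {set V}) (Et : {set E}) (ends : E -> V * V).

Definition cobound (U : {set V}) : {set E} :=
  [set e in Et | ((ends e).1 \in U) != ((ends e).2 \in U)].

Definition coboundary_space : {set {set E}} := [set cobound U | U : {set V}].

(* degree of w in the spanning subgraph with edge set A (loops count twice) *)
Definition sdeg (A : {set E}) (w : V) : nat :=
  #|[set e in A | (ends e).1 == w]| + #|[set e in A | (ends e).2 == w]|.

Definition cycle_space : {set {set E}} :=
  [set A : {set E} | (A \subset Et) && [forall w in Vt, ~~ odd (sdeg A w)]].

Definition bicycle_space : {set {set E}} := cycle_space :&: coboundary_space.

Definition adjacent : rel V :=
  fun w1 w2 => [exists e in Et,
    (((ends e).1 == w1) && ((ends e).2 == w2)) ||
    (((ends e).1 == w2) && ((ends e).2 == w1))].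

Definition connected_graph : Prop :=
  (0 < #|Vt|)%N /\ forall w1 w2, w1 \in Vt -> w2 \in Vt -> connect adjacent w1 w2.
End Graphs.

(* dimension of a GF(2)-subspace, given as a set of vectors (edge sets) *)
Definition gf2_dim (E : finType) (S : {set {set E}}) : nat := logn 2 #|S|.

Definition perp (E : finType) (Et : {set E}) (S : {set {set E}})
  : {set {set E}} :=
  [set A : {set E} | (A \subset Et) && [forall B in S, ~~ odd #|A :&: B|]].

Definition symdiff (E : finType) (A B : {set E}) : {set E} :=
  (A :\: B) :|: (B :\: A).

Definition space_sum (E : finType) (S1 S2 : {set {set E}}) : {set {set E}} :=
  [set symdiff A B | A in S1, B in S2].

Definition cobspace (D : finType) (v f a : D -> D) : {set {set {set D}}} :=
  coboundary_space (GE v f a) (Gends v f a).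

Definition V_sp (D : finType) (v f a : D -> D) := cobspace v f a.
Definition F_sp (D : finType) (v f a : D -> D) :=
  cobspace (dual_v v f a) (dual_f v f a) a.
Definition Z_sp (D : finType) (v f a : D -> D) :=
  cobspace (phial_v v f a) (phial_f v f a) a.

Definition rich (D : finType) (v f a : D -> D) : Prop :=
  perp (squares v f) (V_sp v f a) = space_sum (F_sp v f a) (Z_sp v f a).

(* The map P, its dual D and its phial M share their squares, so the
   coboundary spaces V, F, Z of G_P, G_D, G_M are subspaces of GF(2)^squares,
   of dimensions |V(G_X)| - 1 since G_M, hence also G_P and G_D, is connected.
   Counting the darts around each square shows that F and Z lie in V^perp and
   are orthogonal to each other, and a cut of G_P that is also a cut of G_M is
   a cut of G_D.  Hence
     dim F + dim Z = dim (F + Z) + dim (F :&: Z) <= dim V^perp + dim (Z^perp :&: Z),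
   where Z^perp :&: Z is the bicycle space of G_M; with
   chi(P) = |V(G_P)| - #squares + |V(G_D)| this is the inequality.  Equality
   forces F + Z = V^perp, and conversely if F + Z = V^perp then Z^perp :&: Z is
   orthogonal to F + Z, hence contained in V :&: Z <= F, so both steps are tight. *)

From mathcomp Require Import all_boot all_algebra mxabelem.
From mathcomp Require Import ring zify.
(* Imported last, so that [comp] is the component of Defs, not ssrfun's composition. *)
From Pilot Require Import Defs.
Set Implicit Arguments.
Unset Strict Implicit.
Unset Printing Implicit Defensive.
Import GRing.Theory.
Local Open Scope ring_scope.

Definition b2f (b : bool) : 'F_2 := b%:R.

Lemma F2_addxx (x : 'F_2) : x + x = 0.
Proof. exact/addrr_pchar2/pchar_Fp. Qed.

Lemma b2f_eq0 b : (b2f b == 0) = ~~ b.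
Proof. by case: b. Qed.

Lemma b2f_inj : injective b2f.
Proof. by do 2!case. Qed.

Lemma b2f_eq1 (x : 'F_2) : b2f (x == 1) = x.
Proof. by apply: val_inj; case: x => [[|[|]]]. Qed.

Lemma b2f_neq b c : b2f (b != c) = b2f b + b2f c.
Proof. by case: b; case: c; rewrite ?addr0 ?add0r // F2_addxx. Qed.

Lemma b2f_and b c : b2f (b && c) = b2f b * b2f c.
Proof. by case: b; case: c; rewrite /b2f ?mulr0 ?mulr1. Qed.

Lemma b2f_odd n : n%:R = b2f (odd n).
Proof. by rewrite -Fp_nat_mod // modn2. Qed.

Lemma b2f_odd_card (T : finType) (A : {pred T}) :
  b2f (odd #|A|) = \sum_(x in A) 1.
Proof. by rewrite -b2f_odd -sum1_card natr_sum. Qed.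

Lemma sum_b2f_eq (T : finType) (U : {pred T}) (t : T) :
  \sum_(w in U) b2f (t == w) = b2f (t \in U).
Proof.
case tU: (t \in U); last first.
  by rewrite big1 // => w wU; case: eqP tU => // ->; rewrite wU.
rewrite (bigD1 t) //= eqxx big1 ?addr0 // => w /andP[_].
by rewrite eq_sym => /negbTE ->.
Qed.

Lemma odd_card_setI (T : finType) (Et A B : {set T}) : A \subset Et ->
  b2f (odd #|A :&: B|) = \sum_(s in Et) b2f (s \in A) * b2f (s \in B).
Proof.
move=> AEt; rewrite b2f_odd_card big_mkcond [RHS]big_mkcond /=.
apply: eq_bigr => s _; rewrite !inE -b2f_and.
by case sA: (s \in A); rewrite ?(subsetP AEt s sA) //=; case: (_ \in _).
Qed.

Lemma card_sep_F2 (T : finType) (A : {set T}) (P : pred T) :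
  #|[set x in A | P x]|%:R = \sum_(x in A) b2f (P x).
Proof.
rewrite -sum1_card natr_sum big_mkcond [RHS]big_mkcond /=.
by apply: eq_bigr => x _; rewrite !inE; case: (x \in A); case: (P x).
Qed.

Definition subsets_of (E : finType) (Et : {set E}) (S : {set {set E}}) :=
  {in S, forall A : {set E}, A \subset Et}.

Definition gf2_subspace (E : finType) (Et : {set E}) (S : {set {set E}}) : Prop :=
  [/\ subsets_of Et S, set0 \in S & {in S &, forall A B, symdiff A B \in S}].

Lemma symdiff_xx (T : finType) (A : {set T}) : symdiff A A = set0.
Proof. by apply/setP => x; rewrite !inE andNb. Qed.

Lemma subsets_of_perp (E : finType) (Et : {set E}) (S : {set {set E}}) :
  subsets_of Et (perp Et S).
Proof. by move=> A; rewrite inE => /andP[]. Qed.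

Lemma subsets_of_space_sum (E : finType) (Et : {set E}) (S1 S2 : {set {set E}}) :
  subsets_of Et S1 -> subsets_of Et S2 -> subsets_of Et (space_sum S1 S2).
Proof.
move=> sub1 sub2 _ /imset2P[A B AS1 BS2 ->]; apply/subsetP => e.
by rewrite !inE => /orP[] /andP[_]; [apply: (subsetP (sub1 A AS1)) |
                                      apply: (subsetP (sub2 B BS2))].
Qed.

Lemma connect_preserved (T : finType) (e : rel T) (S : pred T) x y :
  (forall z z', S z -> e z z' -> S z') -> S x -> connect e x y -> S y.
Proof.
move=> eS + /connectP[p + ->]; elim: p x => //= z p IHp x Sx /andP[exz ep].
exact: IHp (eS _ _ Sx exz) ep.
Qed.

Section Components.
Variables (D : finType) (g h : D -> D).
Hypotheses (gK : involutive g) (hK : involutive h).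

Lemma rel2_sym : symmetric (rel2 g h).
Proof.
have invE k : involutive k -> forall x y : D, (y == k x) = (x == k y).
  by move=> kK x y; apply/eqP/eqP => ->.
by move=> x y; rewrite /rel2 (invE g gK) (invE h hK).
Qed.

Lemma mem_comp x y : (y \in comp g h x) = connect (rel2 g h) x y.
Proof. by rewrite inE. Qed.

Lemma comp_refl x : x \in comp g h x.
Proof. by rewrite mem_comp connect0. Qed.

Lemma comp_connect x y : connect (rel2 g h) x y -> comp g h x = comp g h y.
Proof.
move=> cxy; apply/setP => w; rewrite !mem_comp.
exact: (same_connect (sym_connect_sym rel2_sym) cxy).
Qed.

Lemma comp_g x : comp g h (g x) = comp g h x.
Proof. by apply/esym/comp_connect/connect1; rewrite /rel2 eqxx. Qed.

Lemma comp_h x : comp g h (h x) = comp g h x.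
Proof. by apply/esym/comp_connect/connect1; rewrite /rel2 eqxx orbT. Qed.

Lemma comp_in_cycles x : comp g h x \in cycles g h.
Proof. exact: imset_f. Qed.

Lemma cyclesP s x : s \in cycles g h -> x \in s -> s = comp g h x.
Proof. by case/imsetP => y _ -> yx; apply: comp_connect; rewrite -mem_comp. Qed.

Lemma sum_cycles (R : nmodType) (F : D -> R) :
  \sum_(s in cycles g h) \sum_(y in s) F y = \sum_y F y.
Proof.
have trivI : trivIset (cycles g h).
  apply/trivIsetP => A B Acyc Bcyc; apply: contraR => /pred0Pn[x /andP[xA xB]].
  by rewrite (cyclesP Acyc xA) (cyclesP Bcyc xB).
have coverT : cover (cycles g h) = setT.
  apply/setP => x; rewrite inE; apply/bigcupP.
  by exists (comp g h x); [apply: comp_in_cycles | apply: comp_refl].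
by rewrite -(big_trivIset _ trivI) coverT; apply: eq_bigl => x; rewrite inE.
Qed.
End Components.

Lemma cycles_sym (D : finType) (g h : D -> D) : cycles g h = cycles h g.
Proof.
apply: eq_imset => x; apply/setP => y; rewrite !inE.
by apply: eq_connect => z w; rewrite /rel2 orbC.
Qed.

Lemma comp_involution (D : finType) (g : D -> D) x :
  involutive g -> comp g g x = [set x; g x].
Proof.
move=> gK; apply/setP => y; apply/idP/idP; last first.
  by rewrite !inE => /orP[] /eqP ->; [exact: connect0 | apply: connect1; rewrite /rel2 eqxx].
rewrite mem_comp; apply: (connect_preserved (S := mem [set x; g x])); last by rewrite !inE eqxx.
by move=> z w; rewrite !inE /rel2 orbb => /orP[] /eqP -> /eqP ->; rewrite ?gK eqxx ?orbT.
Qed.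

Lemma sum_invariant_F2 (D : finType) (g : D -> D) (F : D -> 'F_2) :
  fpf_involution g -> (forall x, F (g x) = F x) -> \sum_x F x = 0.
Proof.
move=> gP FgE; have gK : involutive g by move=> x; case: (gP x).
rewrite -(sum_cycles gK gK); apply: big1 => _ /imsetP[x _ ->].
have xgx : x != g x by apply/eqP => xE; case: (gP x) => _; rewrite -xE.
by rewrite comp_involution // big_setU1 ?big_set1 ?inE //= FgE F2_addxx.
Qed.

Section Graph.
Variables (V E : finType) (Vt : {set V}) (Et : {set E}) (ends : E -> V * V).
Hypothesis ends_in : forall e, e \in Et -> ((ends e).1 \in Vt) && ((ends e).2 \in Vt).
Local Notation cob := (cobound Et ends).

Lemma cobound_sub U : cob U \subset Et.
Proof. by apply/subsetP => e; rewrite inE => /andP[]. Qed.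

Lemma cobound_symdiff U U' : cob (symdiff U U') = symdiff (cob U) (cob U').
Proof.
apply/setP => e; rewrite /symdiff !inE; case: (e \in Et) => //=.
by case: ((ends e).1 \in U); case: ((ends e).1 \in U');
   case: ((ends e).2 \in U); case: ((ends e).2 \in U').
Qed.

Lemma coboundary_subspace : gf2_subspace Et (coboundary_space Et ends).
Proof.
split=> [_ /imsetP[U _ ->]|| _ _ /imsetP[U _ ->] /imsetP[U' _ ->]].
- exact: cobound_sub.
- have -> : set0 = cob set0 by apply/setP => e; rewrite !inE andbF.
  exact: imset_f.
- by rewrite -cobound_symdiff imset_f.
Qed.

Lemma cobound_setIV U : cob (U :&: Vt) = cob U.
Proof.
apply/setP => e; rewrite !inE; case eEt: (e \in Et) => //=.
by case/andP: (ends_in eEt) => -> ->; rewrite !andbT.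
Qed.

Lemma cobound_setDV U : cob (Vt :\: U) = cob U.
Proof.
apply/setP => e; rewrite !inE; case eEt: (e \in Et) => //=.
case/andP: (ends_in eEt) => -> ->.
by case: ((ends e).1 \in U); case: ((ends e).2 \in U).
Qed.

Lemma gf2_dim_coboundary_space w0 : w0 \in Vt ->
  (forall U, cob U = set0 -> (Vt \subset U) || [disjoint Vt & U]) ->
  gf2_dim (coboundary_space Et ends) = #|Vt|.-1.
Proof.
move=> w0V cob_ker.
have -> : coboundary_space Et ends = cob @: powerset (Vt :\ w0).
  apply/eqP; rewrite eqEsubset andbC; apply/andP; split.
    by apply/subsetP => _ /imsetP[U _ ->]; apply: imset_f.
  apply/subsetP => _ /imsetP[U _ ->]; case w0U: (w0 \in U).
    rewrite -cobound_setDV imset_f // powersetE; apply/subsetP => u.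
    by rewrite !inE => /andP[uU ->]; rewrite andbT; apply: contraNneq uU => ->.
  rewrite -cobound_setIV imset_f // powersetE; apply/subsetP => u.
  by rewrite !inE => /andP[uU ->]; rewrite andbT; apply: contraTneq uU => ->; rewrite w0U.
rewrite /gf2_dim card_in_imset ?card_powerset ?(cardsD1 w0 Vt) ?w0V ?pfactorK //.
move=> U1 U2; rewrite !powersetE => sU1 sU2 eqU.
have sU12 : symdiff U1 U2 \subset Vt :\ w0.
  apply/subsetP => u; rewrite inE => /orP[] /setDP[uU _].
    exact: (subsetP sU1).
  exact: (subsetP sU2).
have := cob_ker (symdiff U1 U2); rewrite cobound_symdiff eqU symdiff_xx => /(_ erefl).
case/orP => [/subsetP/(_ w0 w0V)/(subsetP sU12)|dis]; first by rewrite !inE eqxx.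
have /setP sym0 : symdiff U1 U2 = set0.
  by rewrite -(setIidPr (subset_trans sU12 (subD1set Vt w0))) disjoint_setI0.
apply/setP => u; have := sym0 u; rewrite !inE.
by case: (u \in U1); case: (u \in U2).
Qed.

Lemma sdeg_F2 (A : {set E}) w :
  (sdeg ends A w)%:R = \sum_(e in A) (b2f ((ends e).1 == w) + b2f ((ends e).2 == w)).
Proof. by rewrite /sdeg natrD !card_sep_F2 big_split. Qed.

Lemma odd_card_cobound (A : {set E}) U : A \subset Et ->
  b2f (odd #|A :&: cob U|) = \sum_(w in U) (sdeg ends A w)%:R.
Proof.
move=> AEt; under eq_bigr => w _ do rewrite sdeg_F2.
rewrite exchange_big /= b2f_odd_card big_mkcond [RHS]big_mkcond /=.
apply: eq_bigr => e _; rewrite big_split /= !sum_b2f_eq -b2f_neq !inE.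
by case eA: (e \in A); rewrite //= (subsetP AEt e eA); case: (_ != _).
Qed.

Lemma cycle_space_perp : cycle_space Vt Et ends = perp Et (coboundary_space Et ends).
Proof.
apply/setP => A; rewrite !inE; case AEt: (A \subset Et) => //=.
apply/forall_inP/forall_inP => [even_deg _ /imsetP[U _ ->] | perpA w wVt].
  rewrite -b2f_eq0 odd_card_cobound // big1 // => w _.
  case wVt: (w \in Vt); first by rewrite b2f_odd (negbTE (even_deg w wVt)).
  have neq_w u : u \in Vt -> (u == w) = false.
    by move=> uV; apply: contraTF uV => /eqP ->; rewrite wVt.
  rewrite sdeg_F2 big1 // => e /(subsetP AEt)/ends_in/andP[e1V e2V].
  by rewrite !neq_w // F2_addxx.
have := perpA (cob [set w]) (imset_f _ isT); rewrite -b2f_eq0 odd_card_cobound //.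
by rewrite big_set1 b2f_odd b2f_eq0.
Qed.
End Graph.

Definition rel3 (D : finType) (g h k : D -> D) : rel D :=
  fun x y => [|| y == g x, y == h x | y == k x].

Definition map_connected (D : finType) (v f a : D -> D) : Prop :=
  forall x y, connect (rel3 v f a) x y.

Section Map.
Variables (D : finType) (v f a : D -> D).
Hypothesis mapP : is_map v f a.

Lemma vK : involutive v. Proof. by case: mapP => vP _ _ _ _ x; case: (vP x). Qed.
Lemma fK : involutive f. Proof. by case: mapP => _ fP _ _ _ x; case: (fP x). Qed.
Lemma aK : involutive a. Proof. by case: mapP => _ _ aP _ _ x; case: (aP x). Qed.

Lemma vfC x : v (f x) = f (v x).
Proof. by case: mapP => _ _ _ _ sq; have := sq (f (v x)); rewrite fK vK. Qed.

Lemma square_set x : comp v f x = [set x; v x; f x; v (f x)].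
Proof.
apply/setP => y; apply/idP/idP.
  rewrite mem_comp; apply: (connect_preserved (S := mem [set x; v x; f x; v (f x)])).
    move=> z w; rewrite !inE /rel2 -!orbA => /or4P[] /eqP -> /orP[] /eqP ->;
    by rewrite -?vfC ?vK ?fK eqxx ?orbT.
  by rewrite !inE eqxx.
rewrite !inE -!orbA => /or4P[] /eqP ->.
- exact: connect0.
- by apply: connect1; rewrite /rel2 eqxx.
- by apply: connect1; rewrite /rel2 eqxx orbT.
- by apply: (connect_trans (y := f x)); apply: connect1; rewrite /rel2 eqxx ?orbT.
Qed.

Lemma sum_square (R : nmodType) (F : D -> R) x :
  \sum_(y in comp v f x) F y = F x + F (v x) + F (f x) + F (v (f x)).
Proof.
case: mapP => vP fP _ vf_neq _.
have [[_ /eqP vx] [_ /eqP fx]] := (vP x, fP x).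
have /eqP vfx := vf_neq x; have /eqP fvfx := (vP (f x)).2.
have vvfx : v x != v (f x) by rewrite (inj_eq (can_inj vK)) eq_sym.
have xvfx : x != v (f x) by apply: contra vfx => /eqP {1}->; rewrite vK.
have -> : comp v f x = x |: (v x |: (f x |: [set v (f x)])).
  by rewrite square_set; apply/setP => y; rewrite !inE !orbA.
rewrite !big_setU1 ?big_set1 /= ?addrA // !inE ?negb_or.
- by rewrite eq_sym fvfx.
- by rewrite vfx vvfx.
- by rewrite eq_sym vx eq_sym fx xvfx.
Qed.

Lemma cobound_square U s x : s \in squares v f -> x \in s ->
  (s \in cobound (squares v f) (Gends v f a) U) =
  ((comp v a x \in U) != (comp v a (f x) \in U)).
Proof.
move=> sq xs; rewrite inE sq /Gends; case: pickP => [y|]; last by move/(_ x); rewrite xs.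
rewrite (cyclesP vK fK sq xs) square_set !inE -!orbA => /or4P[] /eqP -> //=.
- by rewrite -vfC !(comp_g vK aK).
- by rewrite fK eq_sym.
- by rewrite -vfC fK !(comp_g vK aK) eq_sym.
Qed.

Lemma Gends_in_cycles s : s \in squares v f ->
  ((Gends v f a s).1 \in cycles v a) && ((Gends v f a s).2 \in cycles v a).
Proof.
rewrite /Gends; case: pickP => [y _|s0]; first by rewrite !comp_in_cycles.
by case/imsetP => x _ sE; have := s0 x; rewrite sE comp_refl.
Qed.

Lemma cobound_eq0 U : map_connected v f a ->
  cobound (squares v f) (Gends v f a) U = set0 ->
  (cycles v a \subset U) || [disjoint cycles v a & U].
Proof.
move=> connP cob0.
have closedU : closed (rel3 v f a) [pred x | comp v a x \in U].
  move=> x y; rewrite /rel3 !inE => /or3P[] /eqP ->.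
  - by rewrite (comp_g vK aK).
  - have := cobound_square U (comp_in_cycles v f x) (comp_refl v f x).
    by rewrite cob0 inE => /esym/negbFE/eqP.
  - by rewrite (comp_h vK aK).
have [x0 _|D0] := pickP (@predT D); last first.
  by apply/orP; left; apply/subsetP => s /imsetP[x]; have := D0 x.
have compE x : (comp v a x \in U) = (comp v a x0 \in U).
  by have := closed_connect closedU (connP x x0); rewrite !inE.
case: (boolP (comp v a x0 \in U)) => x0U; apply/orP; [left | right].
  by apply/subsetP => _ /imsetP[x _ ->]; rewrite compE.
by rewrite disjoint_subset; apply/subsetP => _ /imsetP[x _ ->]; rewrite !inE compE.
Qed.

Lemma gf2_dim_cobspace (x0 : D) : map_connected v f a ->
  gf2_dim (cobspace v f a) = #|cycles v a|.-1.
Proof.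
move=> connP; apply: (gf2_dim_coboundary_space Gends_in_cycles (comp_in_cycles v a x0)).
by move=> U; apply: cobound_eq0.
Qed.

Lemma map_connected_of_graph :
  connected_graph (cycles v a) (squares v f) (Gends v f a) -> map_connected v f a.
Proof.
move=> [_ Gconn] x y; pose R := rel3 v f a.
have connect_comp p q : q \in comp v a p -> connect R p q.
  rewrite mem_comp; apply: connect_sub => p' q' /orP[] /eqP ->;
  by apply: connect1; rewrite /R /rel3 eqxx ?orbT.
pose good (w : {set D}) := [forall q in w, connect R x q].
have good_f p : good (comp v a p) -> good (comp v a (f p)).
  move=> gp; apply/forall_inP => q /connect_comp; apply: connect_trans.
  apply: connect_trans (forall_inP gp p (comp_refl v a p)) _.
  by apply: connect1; rewrite /R /rel3 eqxx orbT.
have good_adj w1 w2 : good w1 -> adjacent (squares v f) (Gends v f a) w1 w2 -> good w2.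
  move=> g1 /existsP[s /andP[_]]; rewrite /Gends; case: pickP => [p _|_] /=.
    by case/orP => /andP[/eqP E1 /eqP E2]; move: g1; rewrite -E1 -E2 => /good_f; rewrite ?fK.
  by case/orP => /andP[/eqP E1 /eqP E2]; rewrite -?E1 -?E2; apply/forall_inP => q; rewrite inE.
have good_x : good (comp v a x) by apply/forall_inP => q /connect_comp.
have := Gconn _ _ (comp_in_cycles v a x) (comp_in_cycles v a y).
move/(connect_preserved good_adj good_x)/forall_inP; apply; exact: comp_refl.
Qed.
End Map.

Lemma map_connected_dual (D : finType) (v f a : D -> D) :
  map_connected v f a -> map_connected f v a.
Proof.
move=> connP x y; apply: connect_sub (connP x y) => p q.
by rewrite /rel3 => /or3P[] /eqP ->; apply: connect1; rewrite eqxx ?orbT.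
Qed.

Lemma dual_map (D : finType) (v f a : D -> D) : is_map v f a -> is_map f v a.
Proof.
move=> mapP; case: (mapP) => vP fP aP vf_neq _; split=> // x.
  exact/nesym/vf_neq.
by rewrite -(vfC mapP) (fK mapP) (vK mapP).
Qed.

Section Phial.
Variables (D : finType) (v f a : D -> D).
Hypothesis mapP : is_map v f a.
Local Notation z := (zmatch v f).

Lemma phial_map : is_map z f a.
Proof.
case: (mapP) => vP fP aP vf_neq sq; rewrite /zmatch; split=> // x.
- split; first exact: sq.
  by move=> vfx; apply: (vf_neq x); rewrite -{1}vfx (vK mapP).
- exact: (vP (f x)).2.
- by rewrite !(fK mapP) (vK mapP).
Qed.

Lemma squares_phial : squares z f = squares v f.
Proof.
apply: eq_imset => x; rewrite (square_set phial_map) (square_set mapP) /zmatch (fK mapP).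
by apply/setP => y; rewrite !inE; do 4!case: (y == _).
Qed.

Lemma map_connected_of_phial : map_connected z f a -> map_connected v f a.
Proof.
move=> connM x y; apply: connect_sub (connM x y) => p q.
rewrite /rel3 => /or3P[] /eqP ->; try by apply: connect1; rewrite /rel3 eqxx ?orbT.
by apply: (connect_trans (y := f p)); apply: connect1; rewrite /rel3 eqxx ?orbT.
Qed.
End Phial.

(** * Orthogonality of the three coboundary spaces *)

Section Orthogonality.
Variables (D : finType) (v f a : D -> D).
Hypothesis mapP : is_map v f a.
Local Notation z := (zmatch v f).
Local Notation Et := (squares v f).
Local Notation cobV := (cobound Et (Gends v f a)).
Local Notation cobF := (cobound Et (Gends f v a)).
Local Notation cobZ := (cobound Et (Gends z f a)).

Let compV_v y : comp v a (v y) = comp v a y.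
Proof. exact: (comp_g (vK mapP) (aK mapP)). Qed.
Let compF_f y : comp f a (f y) = comp f a y.
Proof. exact: (comp_g (fK mapP) (aK mapP)). Qed.
Let compF_vf y : comp f a (v (f y)) = comp f a (v y).
Proof. by rewrite (vfC mapP) compF_f. Qed.
Let compZ_vf y : comp z a (v (f y)) = comp z a y.
Proof. exact: (comp_g (vK (phial_map mapP)) (aK mapP)). Qed.
Let compZ_v y : comp z a (v y) = comp z a (f y).
Proof. by rewrite -{1}[y](fK mapP) compZ_vf. Qed.

Let compV_a y : comp v a (a y) = comp v a y.
Proof. exact: (comp_h (vK mapP) (aK mapP)). Qed.
Let compF_a y : comp f a (a y) = comp f a y.
Proof. exact: (comp_h (fK mapP) (aK mapP)). Qed.
Let compZ_a y : comp z a (a y) = comp z a y.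
Proof. exact: (comp_h (vK (phial_map mapP)) (aK mapP)). Qed.
Let sq_x x : comp v f x \in Et. Proof. exact: comp_in_cycles. Qed.
Let x_sq x : x \in comp v f x. Proof. exact: comp_refl. Qed.

Lemma cobound_square_dual U s x : s \in Et -> x \in s ->
  (s \in cobF U) = ((comp f a x \in U) != (comp f a (v x) \in U)).
Proof. rewrite /squares (cycles_sym v f); exact: (cobound_square (dual_map mapP)). Qed.

Lemma cobound_square_phial U s x : s \in Et -> x \in s ->
  (s \in cobZ U) = ((comp z a x \in U) != (comp z a (f x) \in U)).
Proof. rewrite -(squares_phial mapP); exact: (cobound_square (phial_map mapP)). Qed.

(* Summing the local identity over all squares counts every dart once; the
   dart sum vanishes because its terms are constant on the pairs {y, a y}. *)
Lemma even_card_setI_squares (P Q : D -> bool) (A B : {set {set D}}) :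
  A \subset Et ->
  (forall x, b2f (comp v f x \in A) * b2f (comp v f x \in B) =
             \sum_(y in comp v f x) b2f (P y) * b2f (Q y)) ->
  (forall y, P (a y) = P y) -> (forall y, Q (a y) = Q y) ->
  ~~ odd #|A :&: B|.
Proof.
move=> AEt local Pa Qa; rewrite -b2f_eq0 (odd_card_setI _ AEt).
have -> : \sum_(s in Et) b2f (s \in A) * b2f (s \in B) =
          \sum_(s in Et) \sum_(y in s) b2f (P y) * b2f (Q y).
  by apply: eq_bigr => _ /imsetP[x _ ->]; apply: local.
rewrite (sum_cycles (vK mapP) (fK mapP)); apply/eqP.
by case: mapP => _ _ aP _ _; apply: (sum_invariant_F2 aP) => y; rewrite Pa Qa.
Qed.

Lemma dual_cobspace_perp :
  coboundary_space Et (Gends f v a) \subset perp Et (coboundary_space Et (Gends v f a)).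
Proof.
apply/subsetP => _ /imsetP[U' _ ->]; rewrite inE cobound_sub.
apply/forall_inP => _ /imsetP[U _ ->]; rewrite setIC.
apply: (even_card_setI_squares (P := fun y => comp v a y \in U)
                               (Q := fun y => comp f a y \in U')) => [|x|y|y].
- exact: cobound_sub.
- rewrite (sum_square mapP) (cobound_square mapP U (sq_x x) (x_sq x)).
  rewrite (cobound_square_dual U' (sq_x x) (x_sq x)) !b2f_neq !compV_v compF_f compF_vf.
  ring.
- by rewrite compV_a.
- by rewrite compF_a.
Qed.

Lemma phial_cobspace_perp :
  coboundary_space Et (Gends z f a) \subset perp Et (coboundary_space Et (Gends v f a)).
Proof.
apply/subsetP => _ /imsetP[U' _ ->]; rewrite inE cobound_sub.
apply/forall_inP => _ /imsetP[U _ ->]; rewrite setIC.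
apply: (even_card_setI_squares (P := fun y => comp v a y \in U)
                               (Q := fun y => comp z a y \in U')) => [|x|y|y].
- exact: cobound_sub.
- rewrite (sum_square mapP) (cobound_square mapP U (sq_x x) (x_sq x)).
  rewrite (cobound_square_phial U' (sq_x x) (x_sq x)) !b2f_neq !compV_v compZ_vf compZ_v.
  ring.
- by rewrite compV_a.
- by rewrite compZ_a.
Qed.

Lemma dual_phial_cobspace_perp :
  coboundary_space Et (Gends f v a) \subset perp Et (coboundary_space Et (Gends z f a)).
Proof.
apply/subsetP => _ /imsetP[U _ ->]; rewrite inE cobound_sub.
apply/forall_inP => _ /imsetP[U' _ ->].
apply: (even_card_setI_squares (P := fun y => comp f a y \in U)
                               (Q := fun y => comp z a y \in U')) => [|x|y|y].
- exact: cobound_sub.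
- rewrite (sum_square mapP) (cobound_square_dual U (sq_x x) (x_sq x)).
  rewrite (cobound_square_phial U' (sq_x x) (x_sq x)) !b2f_neq compF_f compF_vf.
  rewrite compZ_vf compZ_v; ring.
- by rewrite compF_a.
- by rewrite compZ_a.
Qed.

(* If the cut of U in G_P equals the cut of U' in G_M, the labelling [w] below
   is constant along f-edges (the two cuts agree on each square) and along
   a-edges, i.e. on the faces; the cut of G_D it defines is the common cut. *)
Lemma cobspace_phial_cap_sub_dual :
  coboundary_space Et (Gends v f a) :&: coboundary_space Et (Gends z f a)
    \subset coboundary_space Et (Gends f v a).
Proof.
apply/subsetP => _ /setIP[/imsetP[U _ ->] /imsetP[U' _ cobVZ]].
pose w y := (comp v a y \in U) (+) (comp z a y \in U').
have cut_eq x : ((comp v a x \in U) != (comp v a (f x) \in U)) =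
                ((comp z a x \in U') != (comp z a (f x) \in U')).
  rewrite -(cobound_square mapP U (sq_x x) (x_sq x)) cobVZ.
  exact: cobound_square_phial.
have w_closed : closed (rel2 f a) [pred y | w y].
  move=> y _ /orP[] /eqP ->; rewrite !inE /w; last by rewrite compV_a compZ_a.
  by move: (cut_eq y); do 4!case: (_ \in _).
pose W := [set comp f a y | y in [pred y | w y]].
have memW y : (comp f a y \in W) = w y.
  apply/imsetP/idP => [[y' wy' yE]|wy]; last by exists y.
  have : y \in comp f a y' by rewrite -yE comp_refl.
  by rewrite mem_comp => /(closed_connect w_closed); rewrite !inE => <-.
suff -> : cobV U = cobF W by apply: imset_f.
apply/setP => s; case sEt: (s \in Et); last by rewrite !inE sEt.
have /imsetP[x _ sE] := sEt; have xs : x \in s by rewrite sE comp_refl.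
rewrite (cobound_square mapP U sEt xs) (cobound_square_dual W sEt xs) !memW /w.
by rewrite compV_v compZ_v; move: (cut_eq x); do 4!case: (_ \in _).
Qed.
End Orthogonality.

(** * Orthogonal complements of row spaces *)

Section OrthogonalComplement.
Variables (K : fieldType) (n : nat).

Lemma sub_kermx_trC m1 m2 (A : 'M[K]_(m1, n)) (B : 'M[K]_(m2, n)) :
  (A <= kermx B^T)%MS = (B <= kermx A^T)%MS.
Proof. by rewrite !sub_kermx -(inj_eq (@trmx_inj _ _ _)) trmx_mul trmxK trmx0. Qed.

Lemma mxrank_kermx_tr m (A : 'M[K]_(m, n)) : \rank (kermx A^T) = (n - \rank A)%N.
Proof. by rewrite mxrank_ker mxrank_tr. Qed.

Lemma kermx_trK m (A : 'M[K]_(m, n)) : (kermx (kermx A^T)^T == A)%MS.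
Proof.
have sAK : (A <= kermx (kermx A^T)^T)%MS by rewrite sub_kermx_trC.
rewrite sAK andbT -(mxrank_leqif_sup sAK).2 !mxrank_kermx_tr.
by rewrite subKn ?rank_leq_col.
Qed.

Section RadicalBound.
Variables (m1 m2 m3 : nat) (MV : 'M[K]_(m1, n)) (MF : 'M[K]_(m2, n)) (MZ : 'M[K]_(m3, n)).
Hypotheses (FV : (MF <= kermx MV^T)%MS) (ZV : (MZ <= kermx MV^T)%MS).
Hypotheses (FZ : (MF <= kermx MZ^T)%MS) (VZF : (MV :&: MZ <= MF)%MS).

Lemma addsmx_sub_kermx : (MF + MZ <= kermx MV^T)%MS.
Proof. by rewrite addsmx_sub FV ZV. Qed.

Lemma capmx_sub_radical : (MF :&: MZ <= kermx MZ^T :&: MZ)%MS.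
Proof. by rewrite sub_capmx capmxSr andbT (submx_trans (capmxSl _ _) FZ). Qed.

Lemma radical_sub_capmx :
  (kermx MV^T == MF + MZ)%MS -> (kermx MZ^T :&: MZ <= MF :&: MZ)%MS.
Proof.
move=> /eqmxP kerVE; set Y := (kermx MZ^T :&: MZ)%MS.
have YZ : (Y <= MZ)%MS := capmxSr _ _.
have YV : (Y <= MV)%MS.
  rewrite -(eqmxP (kermx_trK MV)) sub_kermx_trC kerVE addsmx_sub.
  rewrite [(MZ <= _)%MS]sub_kermx_trC capmxSl andbT sub_kermx_trC.
  by apply: submx_trans YZ _; rewrite sub_kermx_trC.
by rewrite sub_capmx YZ andbT (submx_trans _ VZF) // sub_capmx YV.
Qed.

(* The chain is  rank F + rank Z = rank (F + Z) + rank (F :&: Z)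
                                 <= rank V^perp + rank (Z^perp :&: Z). *)
Lemma mxrank_radical_leqif :
  (\rank MV + \rank MF + \rank MZ <= n + \rank (kermx MZ^T :&: MZ)
     ?= iff (kermx MV^T == MF + MZ)%MS)%N.
Proof.
have sum_cap := mxrank_sum_cap MF MZ; have rVn := rank_leq_col MV.
have rK := mxrank_kermx_tr MV.
have [leS eqS] := leqif_add (mxrank_leqif_sup addsmx_sub_kermx)
                            (mxrank_leqif_sup capmx_sub_radical).
split; first by lia.
have -> : (\rank MV + \rank MF + \rank MZ == n + \rank (kermx MZ^T :&: MZ))%N =
          (\rank (MF + MZ) + \rank (MF :&: MZ) ==
           \rank (kermx MV^T) + \rank (kermx MZ^T :&: MZ))%N.
  by apply/eqP/eqP; lia.
rewrite eqS addsmx_sub_kermx andbT.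
by apply/andP/idP => [[]//|sKS]; split=> //; apply: radical_sub_capmx; rewrite sKS addsmx_sub_kermx.
Qed.
End RadicalBound.
End OrthogonalComplement.

(** * GF(2) subspaces of edge sets as row spaces *)

Section Encoding.
Variables (E : finType) (Et : {set E}).
Implicit Types (A B : {set E}) (S : {set {set E}}).

Definition enc A : 'rV['F_2]_#|Et| := \row_i b2f (enum_val i \in A).

Definition encS S : {set 'rV['F_2]_#|Et|} := enc @: S.

Lemma enc_inj A B : A \subset Et -> B \subset Et -> enc A = enc B -> A = B.
Proof.
move=> AEt BEt AB; apply/setP => e; case eEt: (e \in Et); last first.
  by apply/idP/idP => [/(subsetP AEt)|/(subsetP BEt)]; rewrite eEt.
have := congr1 (fun r : 'rV_#|Et| => r 0 (enum_rank_in eEt e)) AB.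
by rewrite !mxE enum_rankK_in // => /b2f_inj.
Qed.

Lemma enc0 : enc set0 = 0.
Proof. by apply/rowP => i; rewrite !mxE inE. Qed.

Lemma enc_symdiff A B : enc (symdiff A B) = enc A + enc B.
Proof.
apply/rowP => i; rewrite !mxE -b2f_neq !inE.
by case: (enum_val i \in A); case: (enum_val i \in B).
Qed.

Lemma enc_dot A B : A \subset Et -> (enc A *m (enc B)^T) 0 0 = b2f (odd #|A :&: B|).
Proof.
move=> AEt; rewrite (odd_card_setI _ AEt) mxE.
rewrite [RHS](big_enum_val (op := +%R : Monoid.com_law (0 : 'F_2))) /=.
by apply: eq_bigr => i _; rewrite !mxE.
Qed.

Lemma enc_surj (r : 'rV['F_2]_#|Et|) : exists2 A : {set E}, A \subset Et & enc A = r.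
Proof.
exists [set enum_val i | i in [pred i | r 0 i == 1]].
  by apply/subsetP => _ /imsetP[i _ ->]; apply: enum_valP.
by apply/rowP => i; rewrite mxE (mem_imset _ _ enum_val_inj) inE b2f_eq1.
Qed.

Lemma encS_subset S1 S2 : subsets_of Et S1 -> subsets_of Et S2 ->
  (encS S1 \subset encS S2) = (S1 \subset S2).
Proof.
move=> sub1 sub2; apply/idP/idP => [/subsetP encS12|/(imsetS enc)//].
apply/subsetP => A A1; have /imsetP[B B2 AB] := encS12 _ (imset_f enc A1).
by rewrite (enc_inj (sub1 A A1) (sub2 B B2) AB).
Qed.

Lemma subset_rowg S1 S2 m1 m2 (M1 : 'M['F_2]_(m1, #|Et|)) (M2 : 'M['F_2]_(m2, #|Et|)) :
  subsets_of Et S1 -> subsets_of Et S2 -> encS S1 = rowg M1 -> encS S2 = rowg M2 ->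
  (S1 \subset S2) = (M1 <= M2)%MS.
Proof. by move=> sub1 sub2 S1M S2M; rewrite -encS_subset // S1M S2M rowgS. Qed.

Lemma gf2_dim_rowg S m (M : 'M['F_2]_(m, #|Et|)) :
  subsets_of Et S -> encS S = rowg M -> gf2_dim S = \rank M.
Proof.
move=> subS SM; rewrite /gf2_dim -(card_in_imset (f := enc)); last first.
  by move=> A B /subS AEt /subS BEt; apply: enc_inj.
by rewrite -/(encS S) SM card_rowg card_Fp // pfactorK.
Qed.

Lemma rowg_of_subspace S : gf2_subspace Et S ->
  exists M : 'M['F_2]_(#|S|, #|Et|), encS S = rowg M.
Proof.
case=> _ S0 S_symdiff; exists (\matrix_(i < #|S|) enc (enum_val i)).
apply/setP => r; rewrite mem_rowg; apply/idP/idP.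
  case/imsetP => A AS ->; rewrite -(enum_rankK_in AS AS).
  by rewrite -(rowK (fun i : 'I_#|S| => enc (enum_val i))) row_sub.
case/submxP => u ->; rewrite mulmx_sum_row.
apply: (big_ind (fun r => r \in encS S)); first by rewrite -enc0 imset_f.
  by move=> _ _ /imsetP[A AS ->] /imsetP[B BS ->]; rewrite -enc_symdiff imset_f ?S_symdiff.
move=> i _; rewrite rowK -[u 0 i]b2f_eq1.
by case: (_ == 1); rewrite ?scale0r -?enc0 ?scale1r imset_f ?enum_valP.
Qed.

Lemma enc_orthoE A B : A \subset Et ->
  (enc A <= kermx (enc B)^T)%MS = ~~ odd #|A :&: B|.
Proof.
move=> AEt; rewrite sub_kermx -b2f_eq0 -enc_dot //.
apply/eqP/eqP => [->|dot0]; first by rewrite mxE.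
by apply/matrixP => i j; rewrite !ord1 dot0 mxE.
Qed.

Lemma perp_rowg S m (M : 'M['F_2]_(m, #|Et|)) :
  encS S = rowg M -> encS (perp Et S) = rowg (kermx M^T).
Proof.
move=> SM; apply/setP => r; rewrite mem_rowg.
have [A AEt <-] := enc_surj r.
have -> : (enc A \in encS (perp Et S)) = (A \in perp Et S).
  apply/imsetP/idP => [[B BP AB]|AP]; last by exists A.
  by rewrite (enc_inj AEt (subsets_of_perp BP) AB).
rewrite inE AEt sub_kermx_trC -rowgS -SM.
apply/forall_inP/subsetP => [AS _ /imsetP[B BS ->] | AS B BS].
  by rewrite mem_rowg sub_kermx_trC enc_orthoE ?AS.
by rewrite -enc_orthoE // sub_kermx_trC -mem_rowg AS ?imset_f.
Qed.

Lemma space_sum_rowg S1 S2 m1 m2 (M1 : 'M['F_2]_(m1, #|Et|)) (M2 : 'M['F_2]_(m2, #|Et|)) :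
  encS S1 = rowg M1 -> encS S2 = rowg M2 -> encS (space_sum S1 S2) = rowg (M1 + M2)%MS.
Proof.
move=> S1M S2M; apply/setP => r; rewrite mem_rowg; apply/idP/idP.
  case/imsetP => _ /imset2P[A B AS BS ->] ->; rewrite enc_symdiff.
  by apply: addmx_sub_adds; rewrite -mem_rowg -?S1M -?S2M imset_f.
case/sub_addsmxP => u ->.
have /imsetP[A AS ->] : u.1 *m M1 \in encS S1 by rewrite S1M mem_rowg submxMl.
have /imsetP[B BS ->] : u.2 *m M2 \in encS S2 by rewrite S2M mem_rowg submxMl.
by rewrite -enc_symdiff imset_f ?imset2_f.
Qed.

Lemma setI_rowg S1 S2 m1 m2 (M1 : 'M['F_2]_(m1, #|Et|)) (M2 : 'M['F_2]_(m2, #|Et|)) :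
  subsets_of Et S1 -> subsets_of Et S2 -> encS S1 = rowg M1 -> encS S2 = rowg M2 ->
  encS (S1 :&: S2) = rowg (M1 :&: M2)%MS.
Proof.
move=> sub1 sub2 S1M S2M; rewrite rowgI -S1M -S2M; apply/setP => r.
apply/imsetP/setIP => [[A /setIP[AS1 AS2] ->]|[/imsetP[A AS1 ->] /imsetP[B BS2 AB]]].
  by rewrite !imset_f.
by exists A; rewrite // inE AS1 (enc_inj (sub1 A AS1) (sub2 B BS2) AB).
Qed.
End Encoding.

Lemma gf2_dim_radical_leqif (E : finType) (Et : {set E}) (SV SF SZ : {set {set E}}) :
  gf2_subspace Et SV -> gf2_subspace Et SF -> gf2_subspace Et SZ ->
  SF \subset perp Et SV -> SZ \subset perp Et SV -> SF \subset perp Et SZ ->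
  SV :&: SZ \subset SF ->
  (gf2_dim SV + gf2_dim SF + gf2_dim SZ <= #|Et| + gf2_dim (perp Et SZ :&: SZ)
     ?= iff (perp Et SV == space_sum SF SZ))%N.
Proof.
move=> spV spF spZ FV ZV FZ VZF.
have [[subV _ _] [subF _ _] [subZ _ _]] := And3 spV spF spZ.
have [[MV VM] [MF FM] [MZ ZM]] :=
  And3 (rowg_of_subspace spV) (rowg_of_subspace spF) (rowg_of_subspace spZ).
have PV : subsets_of Et (perp Et SV) by apply: subsets_of_perp.
have PZ : subsets_of Et (perp Et SZ) by apply: subsets_of_perp.
have PZZ : subsets_of Et (perp Et SZ :&: SZ) by move=> A /setIP[/PZ].
have VZ : subsets_of Et (SV :&: SZ) by move=> A /setIP[/subV].
have FZsum := subsets_of_space_sum subF subZ.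
rewrite (gf2_dim_rowg subV VM) (gf2_dim_rowg subF FM) (gf2_dim_rowg subZ ZM).
rewrite (gf2_dim_rowg PZZ (setI_rowg PZ subZ (perp_rowg ZM) ZM)).
rewrite eqEsubset (subset_rowg PV FZsum (perp_rowg VM) (space_sum_rowg FM ZM)).
rewrite (subset_rowg FZsum PV (space_sum_rowg FM ZM) (perp_rowg VM)).
apply: mxrank_radical_leqif.
- by rewrite -(subset_rowg subF PV FM (perp_rowg VM)).
- by rewrite -(subset_rowg subZ PV ZM (perp_rowg VM)).
- by rewrite -(subset_rowg subF PZ FM (perp_rowg ZM)).
- by rewrite -(subset_rowg VZ subF (setI_rowg subV subZ VM ZM) FM).
Qed.

Lemma map_dim_leqif (D : finType) (v f a : D -> D) (x0 : D) :
  is_map v f a -> map_connected (zmatch v f) f a ->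
  let Et := squares v f in
  let SZ := coboundary_space Et (Gends (zmatch v f) f a) in
  (#|cycles v a|.-1 + #|cycles f a|.-1 + #|cycles (zmatch v f) a|.-1
     <= #|Et| + gf2_dim (perp Et SZ :&: SZ)
     ?= iff (perp Et (coboundary_space Et (Gends v f a)) ==
             space_sum (coboundary_space Et (Gends f v a)) SZ))%N.
Proof.
move=> mapP connM Et SZ; have connP := map_connected_of_phial connM.
rewrite -(gf2_dim_cobspace mapP x0 connP) -(gf2_dim_cobspace (phial_map mapP) x0 connM).
rewrite -(gf2_dim_cobspace (dual_map mapP) x0 (map_connected_dual connP)).
rewrite /cobspace /GE (cycles_sym f v : squares f v = squares v f) (squares_phial mapP).
exact: (gf2_dim_radical_leqif (coboundary_subspace _ _) (coboundary_subspace _ _)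
  (coboundary_subspace _ _) (dual_cobspace_perp mapP) (phial_cobspace_perp mapP)
  (dual_phial_cobspace_perp mapP) (cobspace_phial_cap_sub_dual mapP)).
Qed.

Theorem theorem2p10 (D : finType) (v f a : D -> D) :
  is_map v f a ->
  connected_graph (GV (phial_v v f a) (phial_f v f a) a)
                  (GE (phial_v v f a) (phial_f v f a) a)
                  (Gends (phial_v v f a) (phial_f v f a) a) ->
  let nVM := #|GV (phial_v v f a) (phial_f v f a) a| in
  let gamma := gf2_dim (bicycle_space
                  (GV (phial_v v f a) (phial_f v f a) a)
                  (GE (phial_v v f a) (phial_f v f a) a)
                  (Gends (phial_v v f a) (phial_f v f a) a)) in
  chi v f a <= 3 - nVM%:Z + gamma%:Z /\
  (chi v f a = 3 - nVM%:Z + gamma%:Z <-> rich v f a).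
Proof.
move=> mapP GMconn nVM gamma; rewrite {}/nVM {}/gamma.
have connM := map_connected_of_graph (phial_map mapP) GMconn.
have [_ /imsetP[x0 _ _]] := card_gt0P GMconn.1.
have pos g : (0 < #|cycles g a|)%N.
  by apply/card_gt0P; exists (comp g a x0); apply: comp_in_cycles.
have [le eq] := map_dim_leqif x0 mapP connM.
rewrite /GV /GE /phial_v /phial_f /bicycle_space.
rewrite (cycle_space_perp (@Gends_in_cycles _ (zmatch v f) f a)) (squares_phial mapP).
rewrite /rich /V_sp /F_sp /Z_sp /cobspace /GE /dual_v /dual_f /phial_v /phial_f /chi.
rewrite (cycles_sym f v : squares f v = squares v f) (squares_phial mapP).
move: le eq (pos v) (pos f) (pos (zmatch v f)).
set nP := #|cycles v a|; set nD := #|cycles f a|; set nM := #|cycles _ a|.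
set m := #|squares v f|; set bicycles := gf2_dim _ => le eq pP pD pM.
split; first by lia.
by apply: (iff_trans _ (iff_sym (rwP eqP))); rewrite -eq; split=> [|/eqP]; lia.
Qed.
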